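(* For every command $c$ of the While-language, stores $\sigma,\sigma'$ and status flag $\delta$: if $(c,\sigma,\Downarrow)\Rightarrow_G\sigma',\delta$ (inductive interpretation), then $\delta\neq\Uparrow$.
   Context: While-language syntax: variables $x$ range over a countably infinite set $\mathit{Var}$; $n$ ranges over natural numbers; values are $v ::= \mathsf{null}\mid n$ ($\mathsf{null}$ distinct from every natural number); expressions are $e ::= v\mid x\mid e_1\oplus e_2$ with $\oplus\in\{+,-,*\}$, where $\oplus(n_1,n_2)$ is the result of the operation on naturals; commands are $c ::= \mathsf{skip}\mid\mathsf{alloc}\ x\mid x:=e\mid c_1;c_2\mid \mathsf{if}\ e\ c_1\ c_2\mid\mathsf{while}\ e\ c$. A store $\sigma$ is a finite partial map from $\mathit{Var}$ to values, with domain $\mathrm{dom}(\sigma)$, lookup $\sigma(x)$, update $\sigma[x\mapsto v]$. Flag-based big-step semantics: status flags $\delta ::= \Downarrow\mid\Uparrow$ (convergent / divergent). Expression evaluation $(e,\sigma,\delta)\Rightarrow_{GE}v,\delta'$ is the least relation with: $(v,\sigma,\Downarrow)\Rightarrow_{GE}v,\Downarrow$; $(x,\sigma,\Downarrow)\Rightarrow_{GE}\sigma(x),\Downarrow$ if $x\in\mathrm{dom}(\sigma)$; if $(e_1,\sigma,\Downarrow)\Rightarrow_{GE}n_1,\delta$ and $(e_2,\sigma,\delta)\Rightarrow_{GE}n_2,\delta'$ ($n_1,n_2$ naturals) then $(e_1\oplus e_2,\sigma,\Downarrow)\Rightarrow_{GE}\oplus(n_1,n_2),\delta'$; and $(e,\sigma,\Uparrow)\Rightarrow_{GE}v,\Uparrow$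 for every value $v$. The command rules for judgments $(c,\sigma,\delta)\Rightarrow_G\sigma',\delta'$ are: (F-Skip) $(\mathsf{skip},\sigma,\Downarrow)\Rightarrow_G\sigma,\Downarrow$; (F-Alloc) $(\mathsf{alloc}\ x,\sigma,\Downarrow)\Rightarrow_G\sigma[x\mapsto\mathsf{null}],\Downarrow$ if $x\notin\mathrm{dom}(\sigma)$; (F-Assign) $(x:=e,\sigma,\Downarrow)\Rightarrow_G\sigma[x\mapsto v],\delta$ if $x\in\mathrm{dom}(\sigma)$ and $(e,\sigma,\Downarrow)\Rightarrow_{GE}v,\delta$; (F-Seq) $(c_1;c_2,\sigma,\Downarrow)\Rightarrow_G\sigma'',\delta'$ if $(c_1,\sigma,\Downarrow)\Rightarrow_G\sigma',\delta$ and $(c_2,\sigma',\delta)\Rightarrow_G\sigma'',\delta'$; (F-If) $(\mathsf{if}\ e\ c_1\ c_2,\sigma,\Downarrow)\Rightarrow_G\sigma',\delta'$ if $v\ne0$, $(e,\sigma,\Downarrow)\Rightarrow_{GE}v,\delta$ and $(c_1,\sigma,\delta)\Rightarrow_G\sigma',\delta'$; (F-IfZ) $(\mathsf{if}\ e\ c_1\ c_2,\sigma,\Downarrow)\Rightarrow_G\sigma',\delta'$ if $(e,\sigma,\Downarrow)\Rightarrow_{GE}0,\delta$ and $(c_2,\sigma,\delta)\Rightarrow_G\sigma',\delta'$; (F-While) $(\mathsf{while}\ e\ c,\sigma,\Downarrow)\Rightarrow_G\sigma'',\delta''$ if $(e,\sigma,\Downarrow)\Rightarrow_{GE}v,\delta$,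 $v\ne0$, $(c,\sigma,\delta)\Rightarrow_G\sigma',\delta'$ and $(\mathsf{while}\ e\ c,\sigma',\delta')\Rightarrow_G\sigma'',\delta''$; (F-WhileZ) $(\mathsf{while}\ e\ c,\sigma,\Downarrow)\Rightarrow_G\sigma,\delta$ if $(e,\sigma,\Downarrow)\Rightarrow_{GE}0,\delta$; (F-Div) $(c,\sigma,\Uparrow)\Rightarrow_G\sigma',\Uparrow$ for every store $\sigma'$. $\Rightarrow_G$ denotes the inductive interpretation (least relation closed under these rules). *)

From HB Require Import structures.
From mathcomp Require Import all_boot.
From mathcomp Require Import finmap.
Set Implicit Arguments. Unset Strict Implicit. Unset Printing Implicit Defensive.
Local Open Scope fmap_scope.

Notation var := nat.

Inductive value : Type := VNull | VNat of nat.

Definition value_eqb (a b : value) : bool :=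
  match a, b with
  | VNull, VNull => true
  | VNat m, VNat n => m == n
  | _, _ => false
  end.
Lemma value_eqP : Equality.axiom value_eqb.
Proof. by case=> [|m] [|n] /=; try constructor; try (case: eqP => [->|H]; constructor; congruence). Qed.
HB.instance Definition _ := hasDecEq.Build value value_eqP.

Inductive binop := OPlus | OMinus | OMult.

Definition op_sem (o : binop) : nat -> nat -> nat :=
  match o with OPlus => addn | OMinus => subn | OMult => muln end.

Inductive expr :=
| EVal of value
| EVar of var
| EBin of binop & expr & expr.

Inductive cmd :=
| CSkip
| CAlloc of var
| CAssign of var & expr
| CSeq of cmd & cmd
| CIf of expr & cmd & cmd
| CWhile of expr & cmd.

Definition store := {fmap var -> value}.

Inductive flag := Conv | Div.

Inductive evalGE : expr -> store -> flag -> value -> flag -> Prop :=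
| GE_Val v s : evalGE (EVal v) s Conv v Conv
| GE_Var (x : nat) (s : store) (v : value) : (s.[? x])%fmap = Some v -> evalGE (EVar x) s Conv v Conv
| GE_Bin o e1 e2 s n1 n2 d d' :
    evalGE e1 s Conv (VNat n1) d ->
    evalGE e2 s d (VNat n2) d' ->
    evalGE (EBin o e1 e2) s Conv (VNat (op_sem o n1 n2)) d'
| GE_Div e s v : evalGE e s Div v Div.

Inductive evalG : cmd -> store -> flag -> store -> flag -> Prop :=
| F_Skip s : evalG CSkip s Conv s Conv
| F_Alloc (x : nat) (s : store) : x \notin domf s -> evalG (CAlloc x) s Conv (s.[x <- VNull])%fmap Conv
| F_Assign (x : nat) (e : expr) (s : store) (v : value) (d : flag) : x \in domf s -> evalGE e s Conv v d ->
    evalG (CAssign x e) s Conv (s.[x <- v])%fmap d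
| F_Seq c1 c2 s s' s'' d d' :
    evalG c1 s Conv s' d -> evalG c2 s' d s'' d' ->
    evalG (CSeq c1 c2) s Conv s'' d'
| F_If e c1 c2 s s' v d d' :
    v <> VNat 0 -> evalGE e s Conv v d -> evalG c1 s d s' d' ->
    evalG (CIf e c1 c2) s Conv s' d'
| F_IfZ e c1 c2 s s' d d' :
    evalGE e s Conv (VNat 0) d -> evalG c2 s d s' d' ->
    evalG (CIf e c1 c2) s Conv s' d'
| F_While e c s s' s'' v d d' d'' :
    evalGE e s Conv v d -> v <> VNat 0 -> evalG c s d s' d' ->
    evalG (CWhile e c) s' d' s'' d'' ->
    evalG (CWhile e c) s Conv s'' d''
| F_WhileZ e c s d :
    evalGE e s Conv (VNat 0) d -> evalG (CWhile e c) s Conv s d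
| F_Div c s s' : evalG c s Div s' Div.

From mathcomp Require Import all_boot finmap.

(* No rule produces the divergent flag from the convergent one: [F_Div] and
   [GE_Div] only propagate a divergence that is already there, so by induction
   a derivation started in the convergent state stays convergent. *)

Lemma evalGE_conv e s d v d' : evalGE e s d v d' -> d = Conv -> d' = Conv.
Proof. by elim=> // ? ? ? ? ? ? ? ? _ IH1 _ IH2 /IH1/IH2. Qed.

Lemma evalG_conv c s d s' d' : evalG c s d s' d' -> d = Conv -> d' = Conv.
Proof.
elim=> //.
- by move=> ? ? ? ? ? _ /evalGE_conv.
- by move=> ? ? ? ? ? ? ? _ IH1 _ IH2 /IH1/IH2.
- by move=> ? ? ? ? ? ? ? ? _ /evalGE_conv Hd _ IH /Hd/IH.
- by move=> ? ? ? ? ? ? ? /evalGE_conv Hd _ IH /Hd/IH.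
- by move=> ? ? ? ? ? ? ? ? ? /evalGE_conv Hd _ _ IH1 _ IH2 /Hd/IH1/IH2.
- by move=> ? ? ? ? /evalGE_conv.
Qed.

Theorem lemma16 (c : cmd) (s s' : store) (d : flag) :
  evalG c s Conv s' d -> d <> Div.
Proof. by move=> /evalG_conv ->. Qed.
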